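(* Let $A_1,A_2\subset\mathcal{M}$ be sets of copies of $G_0$, let $\hat A_2:=\bigcup_{\Gamma\in A_2}\mathcal{M}_\Gamma$, and let $F$ be a non-negative functional of $\{B_\Gamma\}_{\Gamma\in A_2}$, so that $F$ is independent of $\{B_\Gamma\}_{\Gamma\in\mathcal{M}\setminus\hat A_2}$. Then for all $t\ge0$, $$\mathbb{E}\Big[F\,e^{\frac t\sigma\sum_{\Gamma\in\mathcal{M}\setminus A_1}B_\Gamma^c}\Big]\le\mathbb{E}[F]\,e^{\frac t\sigma|A_1\cup\hat A_2|}\,\mathbb{E}[e^{tW}],$$ and in particular $$\mathbb{E}\Big[e^{\frac t\sigma\sum_{\Gamma\in\mathcal{M}\setminus A_1}B_\Gamma^c}\Big]\le e^{\frac t\sigma|A_1|}\,\mathbb{E}[e^{tW}].$$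
   Context: $G_0$ is a graph with at least one edge and no isolated vertices. $E$ is the set of edges of $K_n$; $(B_k)_{k\in E}$ are independent Bernoulli($p$), $p\in(0,1)$; $B_A=\prod_{k\in A}B_k$, $Z^c=Z-\mathbb{E}Z$. $\mathcal{M}$ is the set of all $\Gamma\subset E$ whose spanned graph is isomorphic to $G_0$; for $\Gamma\in\mathcal{M}$, $\mathcal{M}_\Gamma=\{\Gamma'\in\mathcal{M}:\Gamma'\cap\Gamma\neq\emptyset\}$. $\sigma^2=\operatorname{Var}(\sum_{\Gamma\in\mathcal{M}}B_\Gamma)$ and $W=\frac1\sigma\sum_{\Gamma\in\mathcal{M}}B_\Gamma^c$. *)

From HB Require Import structures.
From mathcomp Require Import all_boot all_order all_algebra.
From mathcomp Require Import all_classical all_reals all_analysis.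
Set Implicit Arguments. Unset Strict Implicit. Unset Printing Implicit Defensive.
Import Order.TTheory GRing.Theory Num.Theory.
Local Open Scope ring_scope.

(* Edges of K_n: 2-element subsets of the vertex set 'I_n. *)
Notation edge n := {e : {set 'I_n} | #|e| == 2%N}.

(* Sample space: configurations of the edge variables (B_k)_{k in E}. *)
Notation config n := {ffun edge n -> bool}.

Section Defs.
Variables (R : realType) (n : nat) (p : R).

Definition prob (w : config n) : R :=
  \prod_(k : edge n) (if w k then p else 1 - p).

Definition Expect (X : config n -> R) : R := \sum_(w : config n) prob w * X w.

Definition Var (X : config n -> R) : R :=
  Expect (fun w => (X w - Expect X) ^+ 2).

Definition BA (A : {set edge n}) (w : config n) : R :=
  \prod_(k in A) (w k)%:R.

Definition BAc (A : {set edge n}) (w : config n) : R :=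
  BA A w - Expect (BA A).

End Defs.

Definition spanV n (G : {set edge n}) : {set 'I_n} := \bigcup_(k in G) val k.

Definition iso_G0 (V0 : finType) (e0 : rel V0) n (G : {set edge n}) : Prop :=
  exists f : V0 -> 'I_n,
    [/\ injective f, f @: [set: V0] = spanV G &
        forall u v, e0 u v <-> exists2 k, k \in G & val k = [set f u; f v]].

Definition good_G0 (V0 : finType) (e0 : rel V0) : Prop :=
  [/\ symmetric e0, irreflexive e0, (exists u v, e0 u v) &
      forall u, exists v, e0 u v].

Section Copies.
Variables (V0 : finType) (e0 : rel V0) (n : nat).

Definition Mcopies : {set {set edge n}} :=
  [set G | `[< iso_G0 e0 G >]].
End Copies.

From HB Require Import structures.
From mathcomp Require Import all_boot all_order all_algebra.
From mathcomp Require Import all_classical all_reals all_analysis.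
From mathcomp Require Import ring.
Import Order.TTheory GRing.Theory Num.Theory.
Local Open Scope ring_scope.

Set Implicit Arguments.
Unset Strict Implicit.
Unset Printing Implicit Defensive.

(* Split the sum over M \ A1 into the terms with Γ in \hat A2, each of which
   is at most 1 since B_Γ^c <= 1, and the sum X of the remaining terms.  A
   copy outside \hat A2 shares no edge with any copy in A2, so X is a
   function of the edges outside ∪A2 and e^{tX/σ} is independent of F.
   Finally, writing σW = X + Y, the Harris-FKG inequality for the increasing
   functions e^{tX/σ} and e^{tY/σ} gives E[e^{tW}] >= E[e^{tX/σ}] E[e^{tY/σ}],
   and E[e^{tY/σ}] >= 1 + t E[Y]/σ = 1.  Neither the shape of G0 nor the
   inclusions A1, A2 ⊆ M play a role. *)

Definition depends_on n (S : {set edge n}) (T : Type) (f : config n -> T) :=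
  forall w w' : config n, (forall k, k \in S -> w k = w' k) -> f w = f w'.

Definition increasing n (R : numDomainType) (f : config n -> R) :=
  forall w w' : config n, (forall k, w k ==> w' k) -> f w <= f w'.

Definition set_edge n (w : config n) (i : edge n) (b : bool) : config n :=
  [ffun k => if k == i then b else w k].

Section SetEdge.
Variable n : nat.
Implicit Types (w : config n) (i k : edge n).

Lemma set_edgeE w i b k : set_edge w i b k = if k == i then b else w k.
Proof. by rewrite ffunE. Qed.

Lemma set_edge_id w i : set_edge w i (w i) = w.
Proof. by apply/ffunP => k; rewrite set_edgeE; case: eqP => // ->. Qed.

Lemma set_edgeK w i b c : set_edge (set_edge w i b) i c = set_edge w i c.
Proof. by apply/ffunP => k; rewrite !set_edgeE; case: eqP. Qed.

Lemma set_edge_negK i : involutive (fun w => set_edge w i (~~ w i)).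
Proof. by move=> w; rewrite set_edgeE eqxx negbK set_edgeK set_edge_id. Qed.

Lemma set_edge_le w i k : set_edge w i false k ==> set_edge w i true k.
Proof. by rewrite !set_edgeE; case: eqP => // _; rewrite implybb. Qed.

Lemma sum_config_set_edge (R : nmodType) i (F : config n -> R) :
  \sum_(w : config n) F w
  = \sum_(w : config n | w i) (F (set_edge w i true) + F (set_edge w i false)).
Proof.
rewrite (bigID (fun w => w i)) big_split /=; congr (_ + _).
  by apply: eq_bigr => w wi; rewrite -[in LHS](set_edge_id w i) wi.
rewrite (reindex_inj (can_inj (set_edge_negK i))) /=.
by apply: eq_big => w; rewrite set_edgeE eqxx negbK // => ->.
Qed.

Lemma depends_on_sub (T : Type) (A B : {set edge n}) (f : config n -> T) :
  A \subset B -> depends_on A f -> depends_on B f.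
Proof. by move=> /fintype.subsetP AB df w w' e; apply: df => k /AB; apply: e. Qed.

Lemma depends_on_comp (T U : Type) (S : {set edge n}) (h : T -> U) (f : config n -> T) :
  depends_on S f -> depends_on S (fun w => h (f w)).
Proof. by move=> df w w' /df ->. Qed.

Lemma depends_on_setT (T : Type) (f : config n -> T) : depends_on [set: edge n] f.
Proof. by move=> w w' e; congr f; apply/ffunP => k; apply: e; rewrite inE. Qed.

End SetEdge.

Section ProductMeasure.
Variables (R : realType) (n : nat) (p : R).
Hypotheses (p_ge0 : 0 <= p) (p_le1 : p <= 1).
Implicit Types (f g : config n -> R) (w : config n) (i : edge n).
Local Notation E := (@Expect R n p).

Lemma prob_ge0 w : 0 <= prob p w.
Proof. by apply: prodr_ge0 => k _; case: (w k); rewrite ?subr_ge0. Qed.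

Lemma sum_prob : \sum_(w : config n) prob p w = 1.
Proof.
rewrite /prob -(bigA_distr_bigA (fun k (b : bool) => if b then p else 1 - p)).
by apply: big1 => k _; rewrite big_bool /= addrC subrK.
Qed.

Lemma prob_set_edge w i b :
  prob p (set_edge w i b) =
  (if b then p else 1 - p) * \prod_(k | k != i) (if w k then p else 1 - p).
Proof.
rewrite /prob (bigD1 i) //= set_edgeE eqxx; congr (_ * _).
by apply: eq_bigr => k /negbTE ki; rewrite set_edgeE ki.
Qed.

Lemma eq_Expect f g : f =1 g -> E f = E g.
Proof. by move=> fg; apply: eq_bigr => w _; rewrite fg. Qed.

Lemma ler_Expect f g : (forall w, f w <= g w) -> E f <= E g.
Proof. by move=> fg; apply: ler_sum => w _; rewrite ler_wpM2l ?prob_ge0. Qed.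

Lemma Expect_ge0 f : (forall w, 0 <= f w) -> 0 <= E f.
Proof. by move=> f_ge0; apply: sumr_ge0 => w _; rewrite mulr_ge0 ?prob_ge0. Qed.

Lemma ExpectD f g : E (fun w => f w + g w) = E f + E g.
Proof. by rewrite /Expect -big_split; apply: eq_bigr => w _; rewrite mulrDr. Qed.

Lemma Expect_scale c f : E (fun w => c * f w) = c * E f.
Proof. by rewrite /Expect mulr_sumr; apply: eq_bigr => w _; rewrite mulrCA. Qed.

Lemma Expect_cst c : E (fun _ => c) = c.
Proof. by rewrite /Expect -mulr_suml sum_prob mul1r. Qed.

Lemma Expect_sum (I : finType) (A : {pred I}) (F : I -> config n -> R) :
  E (fun w => \sum_(j in A) F j w) = \sum_(j in A) E (F j).
Proof. by rewrite /Expect exchange_big; apply: eq_bigr => j _; rewrite mulr_sumr. Qed.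

Definition resample i f w :=
  p * f (set_edge w i true) + (1 - p) * f (set_edge w i false).

Lemma Expect_resample i f : E f = E (resample i f).
Proof.
rewrite /Expect !(sum_config_set_edge i); apply: eq_bigr => w _.
by rewrite /resample !set_edgeK !prob_set_edge; ring.
Qed.

Lemma depends_on_resample (S : {set edge n}) i f :
  depends_on S f -> depends_on (S :\ i) (resample i f).
Proof.
move=> df w w' e; have eq_f b : f (set_edge w i b) = f (set_edge w' i b).
  apply: df => k kS; rewrite !set_edgeE; case: eqP => // /eqP ki.
  by apply: e; rewrite !inE ki.
by rewrite /resample !eq_f.
Qed.

Lemma increasing_resample i f : increasing f -> increasing (resample i f).
Proof.
move=> incr_f w w' le_ww'; have le_f b : f (set_edge w i b) <= f (set_edge w' i b).
  by apply: incr_f => k; rewrite !set_edgeE; case: eqP => // _; rewrite implybb.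
by rewrite lerD // ler_wpM2l ?subr_ge0.
Qed.

Lemma resample_mul_ge i f g w : increasing f -> increasing g ->
  resample i f w * resample i g w <= resample i (fun w => f w * g w) w.
Proof.
move=> incr_f incr_g.
have le_f := incr_f _ _ (set_edge_le w i).
have le_g := incr_g _ _ (set_edge_le w i).
have covariance a b c d : p * (a * c) + (1 - p) * (b * d)
    - (p * a + (1 - p) * b) * (p * c + (1 - p) * d)
    = p * (1 - p) * ((a - b) * (c - d)) by ring.
by rewrite /resample -subr_ge0 covariance !mulr_ge0 ?subr_ge0.
Qed.

Lemma Expect_mul_set0 f g : depends_on finset.set0 f ->
  E (fun w => f w * g w) = E f * E g.
Proof.
move=> df; pose w0 : config n := [ffun=> true].
have f_cst w : f w = f w0 by apply: df => k; rewrite inE.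
rewrite (eq_Expect f_cst) Expect_cst -Expect_scale.
by apply: eq_Expect => w; rewrite f_cst.
Qed.

Lemma harris_on (S : {set edge n}) f g :
  depends_on S f -> depends_on S g -> increasing f -> increasing g ->
  E f * E g <= E (fun w => f w * g w).
Proof.
have [m ltSm] := ubnP #|S|; elim: m => // m IH in S f g ltSm *.
move=> df dg incr_f incr_g; have [S0 | [i iS]] := set_0Vmem S.
  by move: df; rewrite S0 => /Expect_mul_set0 ->.
rewrite (cardsD1 i) iS add1n ltnS in ltSm.
rewrite (Expect_resample i (fun w => f w * g w)).
rewrite (Expect_resample i f) (Expect_resample i g).
apply: le_trans (IH _ _ _ ltSm (depends_on_resample df) (depends_on_resample dg)
  (increasing_resample i incr_f) (increasing_resample i incr_g)) _.
by apply: ler_Expect => w; apply: resample_mul_ge.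
Qed.

Lemma harris f g : increasing f -> increasing g ->
  E f * E g <= E (fun w => f w * g w).
Proof. exact: harris_on (depends_on_setT f) (depends_on_setT g). Qed.

Lemma Expect_mul_indep (S : {set edge n}) f g :
  depends_on S f -> depends_on (~: S) g -> E (fun w => f w * g w) = E f * E g.
Proof.
have [m ltSm] := ubnP #|S|; elim: m => // m IH in S f g ltSm *.
move=> df dg; have [S0 | [i iS]] := set_0Vmem S.
  by move: df; rewrite S0 => /Expect_mul_set0 ->.
rewrite (cardsD1 i) iS add1n ltnS in ltSm.
have dg' : depends_on (~: (S :\ i)) g.
  by apply: depends_on_sub dg; rewrite finset.setCS subD1set.
have g_set_edge w b : g (set_edge w i b) = g w.
  by apply: dg => k; rewrite inE set_edgeE; case: eqP => [->|//]; rewrite iS.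
rewrite (Expect_resample i f) -(IH _ _ _ ltSm (depends_on_resample df) dg').
rewrite (Expect_resample i); apply: eq_Expect => w.
by rewrite /resample !g_set_edge; ring.
Qed.

End ProductMeasure.

Section CentredIndicators.
Variables (R : realType) (n : nat) (p : R).
Hypotheses (p_ge0 : 0 <= p) (p_le1 : p <= 1).
Implicit Types (A P Q : {set {set edge n}}) (G : {set edge n}) (w : config n).
Local Notation E := (@Expect R n p).

Lemma BA_ge0 G w : 0 <= BA R G w.
Proof. by apply: prodr_ge0 => k _; apply: ler0n. Qed.

Lemma BA_le1 G w : BA R G w <= 1.
Proof. by apply: prodr_ile1 => k _; case: (w k); rewrite /= ?ler01 ?lexx. Qed.

Lemma BA_increasing G : increasing (BA R G).
Proof.
move=> w w' le_ww'; apply: ler_prod => k _; rewrite ler0n /=.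
by move: (le_ww' k); case: (w k); case: (w' k).
Qed.

Lemma BAc_le1 G w : BAc p G w <= 1.
Proof.
rewrite /BAc lerBlDr (le_trans (BA_le1 G w)) // lerDl Expect_ge0 //.
exact: BA_ge0.
Qed.

Lemma Expect_BAc G : E (BAc p G) = 0.
Proof. by rewrite /BAc ExpectD Expect_cst subrr. Qed.

Lemma sum_BAc_le_card A w : \sum_(G in A) BAc p G w <= #|A|%:R.
Proof. by rewrite -sum1_card natr_sum; apply: ler_sum => G _; apply: BAc_le1. Qed.

Lemma increasing_sum_BAc A : increasing (fun w => \sum_(G in A) BAc p G w).
Proof. by move=> w w' le_ww'; apply: ler_sum => G _; rewrite lerD2r BA_increasing. Qed.

Lemma depends_on_sum_BAc (S : {set edge n}) A :
  (forall G, G \in A -> G \subset S) -> depends_on S (fun w => \sum_(G in A) BAc p G w).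
Proof.
move=> AS w w' e; apply: eq_bigr => G /AS /fintype.subsetP GS; congr (_ - _).
by apply: eq_bigr => k /GS /e ->.
Qed.

Lemma depends_on_bigcup_BA (T : Type) A (F : config n -> T) :
  (forall w w', (forall G, G \in A -> BA R G w = BA R G w') -> F w = F w') ->
  depends_on (\bigcup_(G in A) G) F.
Proof.
move=> dF w w' e; apply: dF => G GA; apply: eq_bigr => k kG.
by rewrite e //; apply/bigcupP; exists G.
Qed.

Lemma Expect_expR_sum_BAc_subset P Q c : 0 <= c -> P \subset Q ->
  E (fun w => expR (c * \sum_(G in P) BAc p G w))
  <= E (fun w => expR (c * \sum_(G in Q) BAc p G w)).
Proof.
move=> c_ge0 PQ.
have incr_exp A : increasing (fun w => expR (c * \sum_(G in A) BAc p G w)).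
  by move=> w w' le_ww'; rewrite ler_expR ler_wpM2l ?increasing_sum_BAc.
have Eexp_ge1 : 1 <= E (fun w => expR (c * \sum_(G in Q :\: P) BAc p G w)).
  apply: (@le_trans _ _ (E (fun w => 1 + c * \sum_(G in Q :\: P) BAc p G w))).
    rewrite ExpectD Expect_cst Expect_scale Expect_sum big1 ?mulr0 ?addr0 //.
    by move=> G _; apply: Expect_BAc.
  by apply: ler_Expect => // w; apply: expR_ge1Dx.
have split_Q w : expR (c * \sum_(G in Q) BAc p G w)
    = expR (c * \sum_(G in P) BAc p G w) * expR (c * \sum_(G in Q :\: P) BAc p G w).
  by rewrite (big_setID P) (finset.setIidPr PQ) mulrDr expRD.
rewrite (eq_Expect p split_Q).
apply: le_trans (harris p_ge0 p_le1 (incr_exp _) (incr_exp _)).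
by rewrite ler_peMr // Expect_ge0 // => w; apply: expR_ge0.
Qed.

Lemma Expect_mul_expR_sum_BAc_le (M A1 A2 : {set {set edge n}}) (F : config n -> R) c :
  0 <= c -> (forall w, 0 <= F w) -> depends_on (\bigcup_(G in A2) G) F ->
  E (fun w => F w * expR (c * \sum_(G in M :\: A1) BAc p G w))
  <= E F
     * expR (c * #|A1 :|: \bigcup_(G in A2) [set G' in M | G' :&: G != finset.set0]|%:R)
     * E (fun w => expR (c * \sum_(G in M) BAc p G w)).
Proof.
set H := \bigcup_(G in A2) [set _ in M | _] => c_ge0 F_ge0 dF.
pose X w := \sum_(G in M :\: A1 :\: H) BAc p G w.
have X_far G : G \in M :\: A1 :\: H -> G \subset ~: \bigcup_(G2 in A2) G2.
  rewrite !inE => /and3P[GH _ GM]; apply/fintype.subsetP => k kG; rewrite inE.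
  apply: contra GH => /bigcupP[G2 G2A kG2]; apply/bigcupP; exists G2 => //.
  by rewrite inE GM; apply/set0Pn; exists k; rewrite inE kG.
have near_le w : \sum_(G in (M :\: A1) :&: H) BAc p G w <= #|A1 :|: H|%:R.
  apply: le_trans (sum_BAc_le_card _ _) _; rewrite ler_nat.
  by apply: subset_leq_card; rewrite finset.subIset // finset.subsetUr orbT.
apply: (@le_trans _ _ (E (fun w => expR (c * #|A1 :|: H|%:R) * (F w * expR (c * X w))))).
  apply: ler_Expect => // w; rewrite (big_setID H) mulrDr expRD mulrCA.
  by rewrite ler_wpM2r ?mulr_ge0 ?expR_ge0 // ler_expR ler_wpM2l.
have dX := depends_on_comp (fun x => expR (c * x)) (depends_on_sum_BAc X_far).
rewrite Expect_scale (Expect_mul_indep p dF dX).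
rewrite mulrCA -mulrA !ler_wpM2l ?Expect_ge0 ?expR_ge0 //.
apply: Expect_expR_sum_BAc_subset => //.
by rewrite !subDset finset.subsetU ?finset.subsetUr ?orbT.
Qed.

End CentredIndicators.

Theorem lemma5p6 (R : realType) (V0 : finType) (e0 : rel V0) (n : nat) (p : R)
  (hG0 : good_G0 e0) (hp : 0 < p < 1)
  (A1 : {set {set edge n}}) (hA1 : A1 \subset Mcopies e0 n) :
  let M := Mcopies e0 n in
  let M_ (G : {set edge n}) := [set G' in M | G' :&: G != finset.set0] in
  let sigma := Num.sqrt (Var p (fun w => \sum_(G in M) BA R G w)) in
  let W (w : config n) := sigma^-1 * \sum_(G in M) BAc p G w in
  (forall (A2 : {set {set edge n}}) (F : config n -> R),
     A2 \subset M ->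
     (forall w, 0 <= F w) ->
     (forall w w', (forall G, G \in A2 -> BA R G w = BA R G w') -> F w = F w') ->
     let hatA2 := \bigcup_(G in A2) M_ G in
     forall t : R, 0 <= t ->
       Expect p (fun w => F w * expR (t / sigma * \sum_(G in M :\: A1) BAc p G w))
       <= Expect p F * expR (t / sigma * #|A1 :|: hatA2|%:R)
          * Expect p (fun w => expR (t * W w)))
  /\
  (forall t : R, 0 <= t ->
     Expect p (fun w => expR (t / sigma * \sum_(G in M :\: A1) BAc p G w))
     <= expR (t / sigma * #|A1|%:R) * Expect p (fun w => expR (t * W w))).
Proof.
move=> M M_ sigma W.
have /andP[/ltW p_ge0 /ltW p_le1] := hp.
have c_ge0 t : 0 <= t -> 0 <= t / sigma by move=> t_ge0; rewrite divr_ge0 ?sqrtr_ge0.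
have EW t : Expect p (fun w => expR (t * W w))
            = Expect p (fun w => expR (t / sigma * \sum_(G in M) BAc p G w)).
  by apply: eq_Expect => w; rewrite mulrA.
split=> [A2 F _ F_ge0 dF hatA2 t t_ge0 | t t_ge0].
  rewrite EW; apply: Expect_mul_expR_sum_BAc_le => //; first exact: c_ge0.
  exact: (depends_on_bigcup_BA (A := A2) dF).
have := @Expect_mul_expR_sum_BAc_le R n p p_ge0 p_le1 M A1 finset.set0 (fun _ => 1) _
  (c_ge0 _ t_ge0) (fun _ => ler01) (fun _ _ _ => erefl).
rewrite big_set0 finset.setU0 Expect_cst mul1r -EW.
by under eq_Expect => w do rewrite mul1r.
Qed.
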